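(* Let $(\mu,b)$ be a stable configuration under perfect observability for the objective game $G$. Then $\pi(b(\theta))=\pi(b(\theta'))$ for all $\theta,\theta'\in\operatorname{supp}\mu$.
   Context: Objective game: $G=(N,A,\pi)$ is a finite $n$-player normal-form game, $N=\{1,\dots,n\}$, finite action sets $A_i$, $A=\prod_{i\in N}A_i$, material payoff (fitness) functions $\pi_i:A\to\mathbb{R}$, extended multilinearly to mixed profiles in $\prod_{i}\Delta(A_i)$; $\pi=(\pi_1,\dots,\pi_n)$. Preference types: $\Theta=\mathbb{R}^A$ (utility functions on $A$, extended multilinearly to mixed profiles). $\mathcal{M}(\Theta^n)$ is the set of product distributions $\mu=\mu_1\times\dots\times\mu_n$ on $\Theta^n$ with each $\mu_i$ finitely supported; $\operatorname{supp}\mu=\prod_i\operatorname{supp}\mu_i$, $\mu_{-i}(\theta_{-i})=\prod_{j\neq i}\mu_j(\theta_j)$. Mutants: for nonempty $J\subseteq N$, a mutant sub-profile is $\tilde\theta_J\in\prod_{j\in J}(\Theta\setminus\operatorname{supp}\mu_j)$ with shares $\varepsilon=(\varepsilon_j)_{j\in J}\in(0,1)^{|J|}$, $\|\varepsilon\|=\max_j\varepsilon_j$; the post-entry distribution $\tilde\mu^\varepsilon$ has $\tilde\mu^\varepsilon_i=(1-\varepsilon_i)\mu_i+\varepsilon_i\delta_{\tilde\theta_i}$ for $i\in J$ and $\tilde\mu^\varepsilon_i=\mu_i$ otherwise. Perfect observability: for $\mu\in\mathcal M(\Theta^n)$, an equilibrium is a map $b:\operatorname{supp}\mu\to\prod_i\Delta(A_i)$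 such that for each $\theta$, $b(\theta)$ is a Nash equilibrium of the normal-form game with action sets $A_i$ and payoffs $\theta_1,\dots,\theta_n$; $B_1(\mu)$ is the set of these; $(\mu,b)$ with $b\in B_1(\mu)$ is a configuration. Average fitness of $\theta_i\in\operatorname{supp}\mu_i$: $\Pi_{\theta_i}(\mu;b)=\sum_{\theta'_{-i}\in\operatorname{supp}\mu_{-i}}\mu_{-i}(\theta'_{-i})\pi_i(b(\theta_i,\theta'_{-i}))$. $(\mu,b)$ is balanced if for each $i$ all types in $\operatorname{supp}\mu_i$ have equal average fitness. Focal set: $B_1(\tilde\mu^\varepsilon;b)=\{\tilde b\in B_1(\tilde\mu^\varepsilon):\tilde b(\theta)=b(\theta)\ \forall\theta\in\operatorname{supp}\mu\}$. $(\mu,b)$ is stable if it is balanced and for every nonempty $J\subseteq N$ and every mutant sub-profile $\tilde\theta_J$ there is $\bar\epsilon\in(0,1)$ such that for every $\varepsilon\in(0,1)^{|J|}$ with $\|\varepsilon\|<\bar\epsilon$ and every $\tilde b\in B_1(\tilde\mu^\varepsilon;b)$, either (i) there is $j\in J$ with $\Pi_{\theta_j}(\tilde\mu^\varepsilon;\tilde b)>\Pi_{\tilde\theta_j}(\tilde\mu^\varepsilon;\tilde b)$ for all $\theta_j\in\operatorname{supp}\mu_j$, or (ii) for every $i\in N$ all types in $\operatorname{supp}\tilde\mu^\varepsilon_i$ have equal average fitness under $(\tilde\mu^\varepsilon,\tilde b)$. *)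

From Stdlib Require Import Reals List.
From HB Require Import structures.
From mathcomp Require Import all_boot.

Set Implicit Arguments.
Unset Strict Implicit.
Unset Printing Implicit Defensive.

Lemma Rplus_assoc' : associative Rplus.
Proof. by move=> x y z; rewrite Rplus_assoc. Qed.
Lemma Rmult_assoc' : associative Rmult.
Proof. by move=> x y z; rewrite Rmult_assoc. Qed.
HB.instance Definition _ :=
  Monoid.isComLaw.Build R R0 Rplus Rplus_assoc' Rplus_comm Rplus_0_l.
HB.instance Definition _ :=
  Monoid.isComLaw.Build R R1 Rmult Rmult_assoc' Rmult_comm Rmult_1_l.

Local Open Scope R_scope.

Section Game.
Variable n : nat.
Variable A : 'I_n -> finType.

Definition prof := {dffun forall i : 'I_n, A i}.

(* Preference types: Theta = R^A. *)
Definition Theta := prof -> R.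

Definition mixed := forall i : 'I_n, A i -> R.

Definition is_mixed_strategy (i : 'I_n) (t : A i -> R) : Prop :=
  (forall a, 0 <= t a) /\ \big[Rplus/R0]_(a : A i) t a = 1.

Definition is_mixed (s : mixed) : Prop := forall i, is_mixed_strategy (s i).

Definition expU (u : prof -> R) (s : mixed) : R :=
  \big[Rplus/R0]_(a : prof) ((\big[Rmult/R1]_(j < n) s j (a j)) * u a).

Definition expU_dev (u : prof -> R) (s : mixed) (i : 'I_n) (t : A i -> R) : R :=
  \big[Rplus/R0]_(a : prof)
     ((t (a i) * \big[Rmult/R1]_(j < n | j != i) s j (a j)) * u a).

Definition is_nash (U : 'I_n -> prof -> R) (s : mixed) : Prop :=
  is_mixed s /\
  forall (i : 'I_n) (t : A i -> R), is_mixed_strategy t ->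
    expU_dev (U i) s (i:=i) t <= expU (U i) s.

Definition dist := seq (Theta * R).

Definition supp (d : dist) : list Theta := map fst d.

Definition is_dist (d : dist) : Prop :=
  NoDup (supp d) /\ (forall p, In p d -> 0 < snd p) /\
  \big[Rplus/R0]_(p <- d) snd p = 1.

Definition pdist := 'I_n -> dist.

Definition is_pdist (mu : pdist) : Prop := forall i, is_dist (mu i).

Definition tprof := 'I_n -> Theta.

Definition in_supp (mu : pdist) (th : tprof) : Prop :=
  forall i, In (th i) (supp (mu i)).

(* Equilibrium maps (total functions; only their values on supp mu matter). *)
Definition eqmap := tprof -> mixed.

Definition in_B1 (mu : pdist) (b : eqmap) : Prop :=
  forall th, in_supp mu th -> is_nash th (b th).

(* Enumeration of supp mu by index profiles. *)
Definition dflt : Theta * R := (fun _ => R0, R0).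
Definition idx (mu : pdist) := {dffun forall j : 'I_n, 'I_(size (mu j))}.
Definition typ_at (mu : pdist) (j : 'I_n) (k : nat) : Theta := fst (nth dflt (mu j) k).
Definition wt_at (mu : pdist) (j : 'I_n) (k : nat) : R := snd (nth dflt (mu j) k).

Definition set_pl (mu : pdist) (i : 'I_n) (d : dist) : pdist :=
  fun j => if j == i then d else mu j.

Variable pi : 'I_n -> prof -> R.

(* The profiles (theta_i, theta'_{-i}) are enumerated as the support of
   mu with mu_i replaced by the single point theta_i. *)
Definition avg_fit (mu : pdist) (b : eqmap) (i : 'I_n) (thi : Theta) : R :=
  let mu' := set_pl mu i [:: (thi, R1)] in
  \big[Rplus/R0]_(k : idx mu')
     ((\big[Rmult/R1]_(j < n | j != i) wt_at mu' j (k j)) *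
      expU (pi i) (b (fun j => typ_at mu' j (k j)))).

Definition balanced (mu : pdist) (b : eqmap) : Prop :=
  forall i th th', In th (supp (mu i)) -> In th' (supp (mu i)) ->
    avg_fit mu b i th = avg_fit mu b i th'.

(* Post-entry distribution for mutants tth_J with shares eps_J
   (only the coordinates in J of tth and eps are used). *)
Definition post_entry (mu : pdist) (J : {set 'I_n}) (tth : tprof)
    (eps : 'I_n -> R) : pdist :=
  fun j => if j \in J then
             (tth j, eps j) :: map (fun p => (fst p, (1 - eps j) * snd p)) (mu j)
           else mu j.

Definition stable (mu : pdist) (b : eqmap) : Prop :=
  balanced mu b /\
  forall (J : {set 'I_n}) (tth : tprof),
    J != set0 ->
    (forall j, j \in J -> ~ In (tth j) (supp (mu j))) ->
    exists ebar : R, 0 < ebar < 1 /\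
      forall eps : 'I_n -> R,
        (forall j, j \in J -> 0 < eps j < 1) ->
        (forall j, j \in J -> eps j < ebar) ->
        forall bt : eqmap,
          in_B1 (post_entry mu J tth eps) bt ->
          (forall th, in_supp mu th -> bt th = b th) ->
          (exists2 j, j \in J &
             forall thj, In thj (supp (mu j)) ->
               avg_fit (post_entry mu J tth eps) bt j (tth j) <
               avg_fit (post_entry mu J tth eps) bt j thj)
          \/ balanced (post_entry mu J tth eps) bt.

End Game.

From Stdlib Require Import Reals List Lra FunctionalExtensionality ClassicalEpsilon.
From HB Require Import structures.
From mathcomp Require Import all_boot.

Set Implicit Arguments.
Unset Strict Implicit.
Unset Printing Implicit Defensive.

(* Suppose two support profiles th, th' differ only in a nonempty set J of
   coordinates and every player of J weakly prefers b th'.  Let mutants with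
   constant (hence indifferent) preferences enter in every population of J,
   and choose the post-entry equilibrium that plays b th' when all of them
   meet the incumbents th outside J, and otherwise treats each mutant as the
   incumbent of its coordinate in th.  Then in each population m of J the
   mutant and th_m have the same fitness except on that single meeting, where
   the mutant earns pi_m(b th') instead of pi_m(b th).  Stability rules out
   the mutant doing strictly worse, and the restored balance forces equality.
   Changing one coordinate at a time (with J = {j} and then J = {j, i}) makes
   every pi_i(b th) independent of th. *)

Lemma In_nth_seq (T : Type) (x0 : T) (s : seq T) p :
  (p < size s)%N -> In (nth x0 s p) s.
Proof.
elim: s p => [|a s IH] [|p] //= lt_p; first by left.
by right; apply: IH.
Qed.

Lemma In_map_fst_nth (T U : Type) (d : T * U) (s : seq (T * U)) x :
  In x (map fst s) -> exists2 p, (p < size s)%N & fst (nth d s p) = x.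
Proof.
elim: s => [|a s IH] //= [<-|/IH [p lt_p <-]]; first by exists 0%N.
by exists p.+1.
Qed.

Lemma In_fst_nth (T U : Type) (d : T * U) (s : seq (T * U)) p :
  (p < size s)%N -> In (fst (nth d s p)) (map fst s).
Proof.
by move=> lt_p; rewrite -(nth_map d (fst d)) //; apply: In_nth_seq; rewrite size_map.
Qed.

Lemma NoDup_map_fst_nth_inj (T U : Type) (d : T * U) (s : seq (T * U)) p q :
  NoDup (map fst s) -> (p < size s)%N -> (q < size s)%N ->
  fst (nth d s p) = fst (nth d s q) -> p = q.
Proof.
elim: s p q => [|a s IH] [|p] [|q] //= /NoDup_cons_iff [a_s s_ND] lt_p lt_q E.
- by case: a_s; rewrite E; apply: In_fst_nth.
- by case: a_s; rewrite -E; apply: In_fst_nth.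
- by congr S; apply: IH.
Qed.

Local Open Scope R_scope.

HB.instance Definition _ := Monoid.isMulLaw.Build R R0 Rmult Rmult_0_l Rmult_0_r.
HB.instance Definition _ :=
  Monoid.isAddLaw.Build R Rmult Rplus Rmult_plus_distr_r Rmult_plus_distr_l.

Lemma prodR_gt0 n (P : pred 'I_n) (F : 'I_n -> R) :
  (forall j, P j -> 0 < F j) -> 0 < \big[Rmult/R1]_(j < n | P j) F j.
Proof.
move=> F_gt0; apply: (big_ind (fun x => 0 < x)) => //; first lra.
by move=> x y; apply: Rmult_lt_0_compat.
Qed.

Lemma exists_fresh_const_fun (T : Type) (a0 : T) (L : list (T -> R)) :
  exists c, ~ In (fun _ => c) L.
Proof.
suff [c c_gt] : exists c, forall f, In f L -> f a0 < c.
  by exists c => /c_gt; lra.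
elim: L => [|f L [c c_gt]]; first by exists 0.
exists (Rmax (f a0 + 1) c) => g /= [<-|/c_gt];
  have := Rmax_l (f a0 + 1) c; have := Rmax_r (f a0 + 1) c; lra.
Qed.

Section Expectations.

Variables (n : nat) (A : 'I_n -> finType).

Definition prof_set (i : 'I_n) (z : A i) (a : prof A) : prof A :=
  [ffun k => dfwith (fun k => a k) z k].

Lemma prof_set_eq i (z : A i) a : prof_set z a i = z.
Proof. by rewrite /prof_set ffunE dfwith_in. Qed.

Lemma prof_set_ne i (z : A i) a k : i != k -> prof_set z a k = a k.
Proof. by move=> ik; rewrite /prof_set ffunE dfwith_out. Qed.

Lemma prof_set_id i (a : prof A) : prof_set (a i) a = a.
Proof.
apply/ffunP => k; case: (eqVneq i k) => [<-|ik]; first by rewrite prof_set_eq.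
by rewrite prof_set_ne.
Qed.

Lemma prof_set_set i (z y : A i) a : prof_set z (prof_set y a) = prof_set z a.
Proof.
apply/ffunP => k; case: (eqVneq i k) => [<-|ik]; first by rewrite !prof_set_eq.
by rewrite !prof_set_ne.
Qed.

Lemma expU_dev_self (u : prof A -> R) (s : mixed A) i : expU_dev u s (s i) = expU u s.
Proof. by apply: eq_bigr => a _; rewrite [in RHS](bigD1 i). Qed.

Lemma expU_dev_const (c : R) (s : mixed A) i (t t' : A i -> R) :
  \big[Rplus/R0]_(x : A i) t x = \big[Rplus/R0]_(x : A i) t' x ->
  expU_dev (fun _ => c) s t = expU_dev (fun _ => c) s t'.
Proof.
move=> sum_tt'.
pose K (x : A i) := \big[Rplus/R0]_(a : prof A | a i == x)
  \big[Rmult/R1]_(j < n | j != i) s j (a j).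
(* [prof_set y] is a bijection between the profiles with [a i = x] and [a i = y]
   that keeps the opponents' actions. *)
have K_const x y : K x = K y.
  rewrite /K (reindex_onto (prof_set x) (prof_set y)); last first.
    by move=> a /eqP ay; rewrite prof_set_set -ay prof_set_id.
  apply: eq_big => [a|a _].
    rewrite prof_set_eq eqxx /= prof_set_set.
    by apply/eqP/eqP => [<-|<-]; rewrite ?prof_set_eq ?prof_set_id.
  by apply: eq_bigr => j ji; rewrite prof_set_ne // eq_sym.
have devE t0 : expU_dev (fun _ => c) s t0 = \big[Rplus/R0]_(x : A i) (t0 x * K x * c).
  rewrite /expU_dev (partition_big (fun a : prof A => a i) xpredT) //=.
  apply: eq_bigr => x _; rewrite /K big_distrr /= big_distrl /=.
  by apply: eq_bigr => a /eqP <-; rewrite Rmult_assoc.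
rewrite !devE; case: (pickP (A i)) => [x0 _|A0]; last by rewrite !big_pred0.
have factorK t0 : \big[Rplus/R0]_(x : A i) (t0 x * K x * c) =
    (\big[Rplus/R0]_(x : A i) t0 x) * K x0 * c.
  by rewrite !big_distrl /=; apply: eq_bigr => x _; rewrite (K_const x x0).
by rewrite !factorK sum_tt'.
Qed.

Lemma is_nash_const_change (U V : 'I_n -> prof A -> R) (s : mixed A) :
  is_nash U s -> (forall i, V i = U i \/ exists c, V i = fun _ => c) -> is_nash V s.
Proof.
move=> [s_mixed s_br] UV; split=> // i t t_mixed.
case: (UV i) => [->|[c ->]]; first exact: s_br.
rewrite -(expU_dev_self _ _ i); apply/Req_le/expU_dev_const.
by case: t_mixed => _ ->; case: (s_mixed i).
Qed.

Lemma is_mixed_prof_inhabited (s : mixed A) : is_mixed s -> exists a : prof A, True.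
Proof.
move=> s_mixed.
have /fin_all_exists [a _] : forall i, exists x : A i, True.
  move=> i; case: (pickP (A i)) => [x _|A0]; first by exists x.
  by have [_] := s_mixed i; rewrite big_pred0 //; lra.
by exists [ffun i => a i].
Qed.

End Expectations.

Section IndexSums.

Variable n : nat.

Definition sum_idx (sz : 'I_n -> nat) (F : ('I_n -> nat) -> R) : R :=
  \big[Rplus/R0]_(k : {dffun forall j : 'I_n, 'I_(sz j)}) F (fun j => nat_of_ord (k j)).

Lemma eq_sum_idx sz (F G : ('I_n -> nat) -> R) :
  (forall k, (forall j, (k j < sz j)%N) -> F k = G k) -> sum_idx sz F = sum_idx sz G.
Proof. by move=> FG; apply: eq_bigr => k _; apply: FG => j; apply: ltn_ord. Qed.

Lemma sum_idxB sz (F G : ('I_n -> nat) -> R) :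
  sum_idx sz F - sum_idx sz G = sum_idx sz (fun k => F k - G k).
Proof.
suff : sum_idx sz (fun k => F k - G k) + sum_idx sz G = sum_idx sz F by lra.
by rewrite /sum_idx -big_split; apply: eq_bigr => k _ /=; ring.
Qed.

Lemma sum_idx_single sz (F : ('I_n -> nat) -> R) k0 :
  (forall j, (k0 j < sz j)%N) ->
  (forall k, (forall j, (k j < sz j)%N) -> F k <> 0 -> k = k0) ->
  sum_idx sz F = F k0.
Proof.
move=> k0_lt F_single.
pose o0 : {dffun forall j : 'I_n, 'I_(sz j)} := [ffun j => Ordinal (k0_lt j)].
have o0E : (fun j => nat_of_ord (o0 j)) = k0.
  by apply: functional_extensionality => j; rewrite ffunE.
rewrite /sum_idx (bigD1 o0) //= big1 /= ?o0E; first ring.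
move=> o o_ne; apply: NNPP => /(F_single _ (fun j => ltn_ord (o j))) o_k0.
case/eqP: o_ne; apply/ffunP => j; apply: val_inj.
by rewrite ffunE /= -o_k0.
Qed.

End IndexSums.

Section Fitness.

Variables (n : nat) (A : 'I_n -> finType) (pi : 'I_n -> prof A -> R).

(* The type profile met by an [m]-type [x] when every other population [j]
   contributes its [k j]-th type; [avg_fit] sums over such index profiles. *)
Definition switch_at (mu : pdist A) (m : 'I_n) (x : Theta A) (k : 'I_n -> nat) : tprof A :=
  fun j => if j == m then x else typ_at mu j (k j).

Definition opp_weight (mu : pdist A) (m : 'I_n) (k : 'I_n -> nat) : R :=
  \big[Rmult/R1]_(j < n | j != m) wt_at mu j (k j).

Definition opp_size (mu : pdist A) (m : 'I_n) (j : 'I_n) : nat :=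
  if j == m then 1%N else size (mu j).

Lemma avg_fit_sum_idx mu b m x :
  avg_fit pi mu b m x = sum_idx (opp_size mu m)
    (fun k => opp_weight mu m k * expU (pi m) (b (switch_at mu m x k))).
Proof.
pose mu' := set_pl mu m [:: (x, R1)].
have -> : avg_fit pi mu b m x = sum_idx (fun j => size (mu' j))
    (fun k => opp_weight mu' m k * expU (pi m) (b (fun j => typ_at mu' j (k j)))) by [].
have -> : (fun j => size (mu' j)) = opp_size mu m.
  by apply: functional_extensionality => j; rewrite /mu' /set_pl /opp_size; case: (j == m).
apply: eq_sum_idx => k k_lt; congr (_ * _).
  by apply: eq_bigr => j /negbTE jm; rewrite /wt_at /mu' /set_pl jm.
congr (expU _ (b _)); apply: functional_extensionality => j.
rewrite /typ_at /mu' /set_pl /switch_at; case: eqP => [->|//].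
by have := k_lt m; rewrite /opp_size eqxx; case: (k m).
Qed.

Lemma avg_fitB mu b m x y :
  avg_fit pi mu b m x - avg_fit pi mu b m y = sum_idx (opp_size mu m)
    (fun k => opp_weight mu m k *
       (expU (pi m) (b (switch_at mu m x k)) - expU (pi m) (b (switch_at mu m y k)))).
Proof.
rewrite !avg_fit_sum_idx sum_idxB; apply: eq_sum_idx => k _; ring.
Qed.

Lemma typ_at_index (mu : pdist A) j x :
  In x (supp (mu j)) -> exists2 p, (p < size (mu j))%N & typ_at mu j p = x.
Proof. exact: In_map_fst_nth. Qed.

Lemma typ_at_inj (mu : pdist A) j p q :
  NoDup (supp (mu j)) -> (p < size (mu j))%N -> (q < size (mu j))%N ->
  typ_at mu j p = typ_at mu j q -> p = q.
Proof. exact: NoDup_map_fst_nth_inj. Qed.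

Lemma wt_at_gt0 (mu : pdist A) j p :
  is_pdist mu -> (p < size (mu j))%N -> 0 < wt_at mu j p.
Proof.
by move=> mu_pdist lt_p; have [_ [wt_pos _]] := mu_pdist j; apply/wt_pos/In_nth_seq.
Qed.

Section PostEntry.

Variables (mu : pdist A) (J : {set 'I_n}) (tth : tprof A) (eps : 'I_n -> R).

Local Notation post := (post_entry mu J tth eps).

Lemma supp_post_entry j :
  supp (post j) = if j \in J then tth j :: supp (mu j) else supp (mu j).
Proof. by rewrite /post_entry /supp; case: ifP => // _ /=; rewrite -map_comp. Qed.

Lemma size_post_entry j :
  size (post j) = if j \in J then (size (mu j)).+1 else size (mu j).
Proof. by rewrite /post_entry; case: ifP => // _ /=; rewrite size_map. Qed.

Lemma typ_at_post_in0 j : j \in J -> typ_at post j 0 = tth j.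
Proof. by rewrite /typ_at /post_entry => ->. Qed.

Lemma NoDup_supp_post_entry j :
  is_pdist mu -> ~ In (tth j) (supp (mu j)) -> NoDup (supp (post j)).
Proof.
move=> mu_pdist tth_fresh; have [ND _] := mu_pdist j.
by rewrite supp_post_entry; case: ifP => // _; apply: NoDup_cons.
Qed.

Lemma wt_at_post_entry_gt0 j p :
  is_pdist mu -> (forall i, i \in J -> 0 < eps i < 1) ->
  (p < size (post j))%N -> 0 < wt_at post j p.
Proof.
move=> mu_pdist eps_J; rewrite size_post_entry /wt_at /post_entry.
case: ifP => jJ; last exact: wt_at_gt0.
have := eps_J j jJ; case: p => [|p] /= eps_j lt_p; first lra.
rewrite (nth_map (dflt A)) //=; apply: Rmult_lt_0_compat; first lra.
exact: wt_at_gt0.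
Qed.

End PostEntry.

End Fitness.

Section Invasion.

Variables (n : nat) (A : 'I_n -> finType) (pi : 'I_n -> prof A -> R).
Variables (mu : pdist A) (b : eqmap A).
Hypotheses (mu_pdist : is_pdist mu) (b_B1 : in_B1 mu b).
Variables (J : {set 'I_n}) (th th' tth : tprof A) (eps : 'I_n -> R).
Hypotheses (J_ne : J != set0) (th_supp : in_supp mu th) (th'_supp : in_supp mu th').
Hypothesis th'_out : forall m, m \notin J -> th' m = th m.
Hypothesis tth_fresh : forall j, ~ In (tth j) (supp (mu j)).
Hypothesis tth_const : forall j, exists c, tth j = fun _ => c.
Hypothesis eps_J : forall j, j \in J -> 0 < eps j < 1.

Local Notation post := (post_entry mu J tth eps).

Definition invaded : tprof A := fun j => if j \in J then tth j else th j.

Definition restore_at (j : 'I_n) (x : Theta A) : Theta A :=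
  if excluded_middle_informative (x = tth j) then th j else x.

Definition restore (P : tprof A) : tprof A := fun j => restore_at j (P j).

Definition entrant_b : eqmap A := fun P =>
  if excluded_middle_informative (P = invaded) then b th' else b (restore P).

Lemma supp_neq_tth j x : In x (supp (mu j)) -> x <> tth j.
Proof. by move=> x_supp x_tth; subst x; apply: tth_fresh x_supp. Qed.

Lemma restore_at_tth j : restore_at j (tth j) = th j.
Proof. by rewrite /restore_at; case: excluded_middle_informative. Qed.

Lemma restore_at_supp j x : In x (supp (mu j)) -> restore_at j x = x.
Proof.
move=> x_supp; rewrite /restore_at.
by case: excluded_middle_informative => //= /(supp_neq_tth x_supp).
Qed.

Lemma restore_supp P : in_supp mu P -> restore P = P.
Proof.
by move=> P_supp; apply: functional_extensionality => j; apply: restore_at_supp.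
Qed.

Lemma restore_in_supp P : in_supp post P -> in_supp mu (restore P).
Proof.
move=> P_supp j; rewrite /restore /restore_at.
case: excluded_middle_informative => /= [_|P_tth]; first exact: th_supp.
by have := P_supp j; rewrite supp_post_entry; case: ifP => _ //= [P_tth'|//]; case: P_tth.
Qed.

Lemma entrant_b_supp P : in_supp mu P -> entrant_b P = b P.
Proof.
move=> P_supp; rewrite /entrant_b restore_supp //.
case: excluded_middle_informative => // P_inv.
case/set0Pn: J_ne => m mJ; case: (supp_neq_tth (P_supp m)).
by rewrite P_inv /invaded mJ.
Qed.

Lemma entrant_b_B1 : in_B1 post entrant_b.
Proof.
move=> P P_supp; rewrite /entrant_b.
case: excluded_middle_informative => /= [->|_].
  apply: is_nash_const_change (b_B1 th'_supp) _ => i; rewrite /invaded.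
  by case: ifP => iJ; [right | left; rewrite th'_out ?iJ].
apply: is_nash_const_change (b_B1 (restore_in_supp P_supp)) _ => i.
rewrite /restore /restore_at.
by case: excluded_middle_informative => /= [->|_]; [right | left].
Qed.

Lemma entrant_fitness_gap m : m \in J ->
  exists2 w, 0 < w &
    avg_fit pi post entrant_b m (tth m) - avg_fit pi post entrant_b m (th m) =
    w * (expU (pi m) (b th') - expU (pi m) (b th)).
Proof.
move=> mJ.
have post_inj j p q : (p < size (post j))%N -> (q < size (post j))%N ->
    typ_at post j p = typ_at post j q -> p = q.
  exact/typ_at_inj/NoDup_supp_post_entry.
have /fin_all_exists2 [k0 k0_lt k0_typ] :
    forall j, exists2 p, (p < size (post j))%N & typ_at post j p = invaded j.
  move=> j; apply: typ_at_index; rewrite supp_post_entry /invaded.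
  by case: ifP => _; [left | apply: th_supp].
have k0m : k0 m = 0%N.
  apply: post_inj (k0_lt m) _ _; first by rewrite size_post_entry mJ.
  by rewrite k0_typ typ_at_post_in0 /invaded mJ.
have switch_tth_k0 : switch_at post m (tth m) k0 = invaded.
  apply: functional_extensionality => j; rewrite /switch_at.
  by case: eqP => [->|_]; rewrite ?/invaded ?mJ ?k0_typ.
have switch_th_not_invaded k : switch_at post m (th m) k <> invaded.
  move=> /(f_equal (fun P => P m)); rewrite /switch_at /invaded eqxx mJ.
  exact: supp_neq_tth.
have entrant_th k :
    entrant_b (switch_at post m (th m) k) = b (restore (switch_at post m (th m) k)).
  by rewrite /entrant_b; case: excluded_middle_informative => //= /switch_th_not_invaded.
have restore_switch k :
    restore (switch_at post m (tth m) k) = restore (switch_at post m (th m) k).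
  apply: functional_extensionality => j; rewrite /restore /switch_at.
  by case: eqP => // ->; rewrite restore_at_tth restore_at_supp.
have restore_th_k0 : restore (switch_at post m (th m) k0) = th.
  apply: functional_extensionality => j; rewrite /restore /switch_at.
  case: eqP => [->|_]; first exact: restore_at_supp.
  by rewrite k0_typ /invaded; case: ifP => _; rewrite ?restore_at_tth ?restore_at_supp.
rewrite avg_fitB (sum_idx_single (k0 := k0)).
- exists (opp_weight post m k0).
    by apply: prodR_gt0 => j _; apply: wt_at_post_entry_gt0.
  rewrite switch_tth_k0 entrant_th restore_th_k0 /entrant_b.
  by case: excluded_middle_informative.
- by move=> j; rewrite /opp_size; case: eqP => [->|_]; rewrite ?k0m.
move=> k k_lt gap_ne0.
(* Off the invaded meeting the entrant and the incumbent are restored alike. *)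
have k_inv : switch_at post m (tth m) k = invaded.
  case: (excluded_middle_informative (switch_at post m (tth m) k = invaded)) => // k_inv.
  case: gap_ne0; rewrite entrant_th /entrant_b restore_switch.
  by case: excluded_middle_informative => /= [/k_inv //|_]; ring.
apply: functional_extensionality => j; have := k_lt j; rewrite /opp_size.
case: eqP => [->|/eqP jm k_lt_j]; first by rewrite k0m; case: (k m).
apply: (post_inj _ _ _ k_lt_j (k0_lt j)).
by rewrite k0_typ -k_inv /switch_at (negbTE jm).
Qed.

Lemma invasion_payoff_eq :
  (forall m, m \in J -> expU (pi m) (b th) <= expU (pi m) (b th')) ->
  (exists2 j, j \in J & forall thj, In thj (supp (mu j)) ->
     avg_fit pi post entrant_b j (tth j) < avg_fit pi post entrant_b j thj)
  \/ balanced pi post entrant_b ->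
  forall m, m \in J -> expU (pi m) (b th') = expU (pi m) (b th).
Proof.
move=> le_th [[j jJ worse]|bal] m mJ.
  exfalso; have [w w_gt0 gap] := entrant_fitness_gap jJ.
  have := worse _ (th_supp j); have := le_th j jJ.
  have := Rmult_le_pos w (expU (pi j) (b th') - expU (pi j) (b th)).
  lra.
have [w w_gt0 gap] := entrant_fitness_gap mJ.
rewrite (bal m (tth m) (th m)) ?supp_post_entry ?mJ /= in gap; [|by left|by right].
have : w * (expU (pi m) (b th') - expU (pi m) (b th)) = 0 by lra.
by case/Rmult_integral; lra.
Qed.

End Invasion.

Lemma stable_payoff_eq n (A : 'I_n -> finType) (pi : 'I_n -> prof A -> R)
    (mu : pdist A) (b : eqmap A) (J : {set 'I_n}) (th th' : tprof A) :
  is_pdist mu -> in_B1 mu b -> stable pi mu b ->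
  in_supp mu th -> in_supp mu th' -> J != set0 ->
  (forall m, m \notin J -> th' m = th m) ->
  (forall m, m \in J -> expU (pi m) (b th) <= expU (pi m) (b th')) ->
  forall m, m \in J -> expU (pi m) (b th') = expU (pi m) (b th).
Proof.
move=> mu_pdist b_B1 [_ stab] th_supp th'_supp J_ne th'_out le_th.
have [a0 _] := is_mixed_prof_inhabited (b_B1 _ th_supp).1.
have /fin_all_exists [c c_fresh] :
    forall j, exists c, ~ In (fun _ : prof A => c) (supp (mu j)).
  by move=> j; apply: exists_fresh_const_fun a0 _.
pose tth : tprof A := fun j _ => c j.
have tth_const j : exists c, tth j = fun _ => c by exists (c j).
have [ebar [ebar_gt0 stab_eps]] := stab J tth J_ne (fun j _ => c_fresh j).
pose eps (_ : 'I_n) := ebar / 2.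
have eps_J j : j \in J -> 0 < eps j < 1 by rewrite /eps; lra.
apply: (invasion_payoff_eq mu_pdist th_supp c_fresh eps_J le_th).
apply: stab_eps => [//|j _||].
- by rewrite /eps; lra.
- exact: (entrant_b_B1 b_B1 th_supp th'_supp th'_out tth_const).
- exact: (entrant_b_supp _ _ _ J_ne c_fresh).
Qed.

Lemma stable_payoff_eq_at n (A : 'I_n -> finType) (pi : 'I_n -> prof A -> R)
    (mu : pdist A) (b : eqmap A) (J : {set 'I_n}) (th th' : tprof A) (m0 : 'I_n) :
  is_pdist mu -> in_B1 mu b -> stable pi mu b ->
  in_supp mu th -> in_supp mu th' -> m0 \in J ->
  (forall m, m \notin J -> th' m = th m) ->
  (forall m, m \in J -> m != m0 -> expU (pi m) (b th) = expU (pi m) (b th')) ->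
  expU (pi m0) (b th) = expU (pi m0) (b th').
Proof.
move=> mu_pdist b_B1 stab th_supp th'_supp m0J th'_out eq_others.
have J_ne : J != set0 by apply/set0Pn; exists m0.
case: (Rle_dec (expU (pi m0) (b th)) (expU (pi m0) (b th'))) => [le0|gt0].
  symmetry; apply: (stable_payoff_eq mu_pdist b_B1 stab th_supp th'_supp J_ne th'_out) => //.
  move=> m mJ; case: (eqVneq m m0) => [-> //|mm0].
  by rewrite (eq_others m mJ mm0); apply: Rle_refl.
apply: (stable_payoff_eq mu_pdist b_B1 stab th'_supp th_supp J_ne) => //.
  by move=> m /th'_out ->.
move=> m mJ; case: (eqVneq m m0) => [->|mm0]; first lra.
by rewrite (eq_others m mJ mm0); apply: Rle_refl.
Qed.

Lemma stable_payoff_eq_single n (A : 'I_n -> finType) (pi : 'I_n -> prof A -> R)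
    (mu : pdist A) (b : eqmap A) (th th' : tprof A) (j : 'I_n) :
  is_pdist mu -> in_B1 mu b -> stable pi mu b ->
  in_supp mu th -> in_supp mu th' -> (forall m, m != j -> th' m = th m) ->
  forall i, expU (pi i) (b th) = expU (pi i) (b th').
Proof.
move=> mu_pdist b_B1 stab th_supp th'_supp th'_out.
have out (J : {set 'I_n}) : j \in J -> forall m, m \notin J -> th' m = th m.
  by move=> jJ m mJ; apply: th'_out; apply: contraNneq mJ => ->.
have eq_j : expU (pi j) (b th) = expU (pi j) (b th').
  apply: (stable_payoff_eq_at mu_pdist b_B1 stab th_supp th'_supp (set11 j)).
    exact: out (set11 j).
  by move=> m /set1P ->; rewrite eqxx.
move=> i; case: (eqVneq i j) => [-> //|ij].
have jJ : j \in [set j; i] by rewrite !inE eqxx.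
have iJ : i \in [set j; i] by rewrite !inE eqxx orbT.
apply: (stable_payoff_eq_at mu_pdist b_B1 stab th_supp th'_supp iJ (out _ jJ)).
by move=> m; rewrite !inE => /orP [/eqP -> //|/eqP ->]; rewrite eqxx.
Qed.

Lemma eq_on_prod_of_single_change n (T U : Type) (X : 'I_n -> T -> Prop)
    (f : ('I_n -> T) -> U) :
  (forall x y (j : 'I_n), (forall m, X m (x m)) -> (forall m, X m (y m)) ->
     (forall m, m != j -> y m = x m) -> f x = f y) ->
  forall x y, (forall m, X m (x m)) -> (forall m, X m (y m)) -> f x = f y.
Proof.
move=> single x y x_X y_X.
pose h k : 'I_n -> T := fun m => if (m < k)%N then y m else x m.
have h_X k m : X m (h k m) by rewrite /h; case: ifP.
have hn : h n = y by apply: functional_extensionality => m; rewrite /h ltn_ord.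
suff fh k : f x = f (h k) by rewrite (fh n) hn.
elim: k => [|k ->]; first by congr f; apply: functional_extensionality.
case: (ltnP k n) => [kn|nk].
  apply: (single _ _ (Ordinal kn)) => // m mk; rewrite /h ltnS leq_eqVlt.
  by have /negbTE -> : nat_of_ord m != k by apply: contraNneq mk => mk; apply/eqP/val_inj.
congr f; apply: functional_extensionality => m; rewrite /h.
have mk : (m < k)%N := leq_trans (ltn_ord m) nk.
by rewrite mk ltnS ltnW.
Qed.

Theorem mainTheorem2 (n : nat) (A : 'I_n -> finType)
    (pi : 'I_n -> prof A -> R) (mu : pdist A) (b : eqmap A) :
  is_pdist mu ->
  in_B1 mu b ->
  stable pi mu b ->
  forall th th' : tprof A, in_supp mu th -> in_supp mu th' ->
    forall i : 'I_n, expU (pi i) (b th) = expU (pi i) (b th').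
Proof.
move=> mu_pdist b_B1 stab th th' th_supp th'_supp i.
apply: (eq_on_prod_of_single_change (X := fun m t => In t (supp (mu m)))
          (f := fun th => expU (pi i) (b th))) th_supp th'_supp.
move=> x y j x_supp y_supp y_out.
exact: stable_payoff_eq_single mu_pdist b_B1 stab x_supp y_supp y_out i.
Qed.
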